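(* Let $p(L,M,D;\mu\to1)$ be a generative reasoning model, let $\alpha\in L$, and let $\Delta\subseteq L$ be finite. Then $p(\alpha\mid\Delta)=1$ if and only if $S\mathrel{|\!\!\equiv}\alpha$ for every cardinality-maximal possible subset $S$ of $\Delta$.
   Context: Fix a multiset of data $\{d_1,\dots,d_K\}$ with $K\ge1$, and a propositional language $L$ over finitely many atoms, with set of models (truth assignments) $\mathcal M$. A function $m:\{d_1,\dots,d_K\}\to\mathcal M$ assigns to each datum the model it supports. The probability of a model $n$ is $p(n)=|\{k:m(d_k)=n\}|/K$. For $\mu\in(0,1)$ and $\alpha\in L$, set $p(\alpha\mid m)=\mu$ if $m$ satisfies $\alpha$ and $1-\mu$ otherwise. For finite $\Delta$, set $p(\Delta\mid m)=\prod_{\beta\in\Delta}p(\beta\mid m)$, which is $1$ for empty $\Delta$. In $p(L,M,D;\mu\to1)$, $$p(\alpha\mid\Delta)=\lim_{\mu\to1^-}\frac{\sum_{m}p(\alpha\mid m)p(\Delta\mid m)p(m)}{\sum_m p(\Delta\mid m)p(m)}.$$ Notation and definitions: - For $S\subseteq L$, $[\![S]\!]$ is the set of models satisfying every formula of $S$, $[\![\alpha]\!]=[\![\{\alpha\}]\!]$, and $[\![S]\!]_p=\{m\in[\![S]\!]:p(m)\neq0\}$. - $S\mathrel{|\!\!\equiv}\alpha$ (empirical consequence) means $[\![S]\!]_p\subseteq[\![\alpha]\!]_p$. - $S\subseteq\Delta$ is a maximal possible subset of $\Delta$ if $[\![S]\!]_p\neq\emptyset$ and $[\![S\cup\{\beta\}]\!]_p=\emptyset$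 for all $\beta\in\Delta\setminus S$. - A cardinality-maximal possible subset is a maximal possible subset of maximum cardinality among all maximal possible subsets of $\Delta$. *)

From HB Require Import structures.
From mathcomp Require Import all_boot all_order all_algebra.
From mathcomp Require Import all_classical all_reals all_analysis.
Set Implicit Arguments. Unset Strict Implicit. Unset Printing Implicit Defensive.
Import Order.TTheory GRing.Theory Num.Theory.
Local Open Scope ring_scope.

Inductive pform (A : Type) : Type :=
| Atom of A
| Neg of pform A
| And of pform A & pform A
| Or of pform A & pform A
| Imp of pform A & pform A.

Section FormCount.
Variable A : countType.
Fixpoint enc (f : pform A) : GenTree.tree A :=
  match f with
  | Atom a => GenTree.Leaf a
  | Neg f => GenTree.Node 0 [:: enc f]
  | And f g => GenTree.Node 1 [:: enc f; enc g]
  | Or f g => GenTree.Node 2 [:: enc f; enc g]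
  | Imp f g => GenTree.Node 3 [:: enc f; enc g]
  end.
Fixpoint dec (t : GenTree.tree A) : option (pform A) :=
  match t with
  | GenTree.Leaf a => Some (Atom a)
  | GenTree.Node 0 [:: t] => omap (@Neg A) (dec t)
  | GenTree.Node n [:: t; u] =>
      match dec t, dec u with
      | Some f, Some g =>
          match n with
          | 1 => Some (And f g) | 2 => Some (Or f g) | 3 => Some (Imp f g)
          | _ => None end
      | _, _ => None end
  | _ => None
  end.
Lemma encK : pcancel enc dec.
Proof. by elim=> //= [f -> | f -> g -> | f -> g -> | f -> g ->]. Qed.
HB.instance Definition _ := Countable.copy (pform A) (pcan_type encK).
End FormCount.

Definition pmodel (A : finType) := {ffun A -> bool}.

Fixpoint sat (A : finType) (v : pmodel A) (f : pform A) : bool :=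
  match f with
  | Atom a => v a
  | Neg f => ~~ sat v f
  | And f g => sat v f && sat v g
  | Or f g => sat v f || sat v g
  | Imp f g => sat v f ==> sat v g
  end.

Section GRM.
Variables (R : realType) (A : finType) (K : nat) (dm : 'I_K -> pmodel A).

(* p(n) = |{k : m(d_k) = n}| / K ; data indexed by 'I_K, dm k = m(d_k) *)
Definition pm (n : pmodel A) : R := #|[set k | dm k == n]|%:R / K%:R.

Definition pf (mu : R) (v : pmodel A) (a : pform A) : R :=
  if sat v a then mu else 1 - mu.

Definition pD (mu : R) (v : pmodel A) (D : seq (pform A)) : R :=
  \prod_(b <- D) pf mu v b.

(* the grm_ratio whose limit as mu -> 1^- defines p(alpha | Delta) *)
Definition grm_ratio (a : pform A) (D : seq (pform A)) (mu : R) : R :=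
  (\sum_(v : pmodel A) pf mu v a * pD mu v D * pm v) /
  (\sum_(v : pmodel A) pD mu v D * pm v).

Definition possible (S : seq (pform A)) : Prop :=
  exists v : pmodel A, pm v != 0 /\ all (sat v) S.

Definition emp_cons (S : seq (pform A)) (a : pform A) : Prop :=
  forall v : pmodel A, pm v != 0 -> all (sat v) S -> sat v a.

(* finite sets of formulas are represented by duplicate-free sequences *)
Definition maximal_possible (D S : seq (pform A)) : Prop :=
  [/\ uniq S, {subset S <= D}, possible S &
      forall b, b \in D -> b \notin S -> ~ possible (b :: S)].

Definition card_max_possible (D S : seq (pform A)) : Prop :=
  maximal_possible D S /\
  forall S', maximal_possible D S' -> (size S' <= size S)%N.
End GRM.

From HB Require Import structures.
From mathcomp Require Import all_boot all_order all_algebra.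
From mathcomp Require Import all_classical all_reals all_analysis.
From mathcomp Require Import unstable zify.
Set Implicit Arguments. Unset Strict Implicit. Unset Printing Implicit Defensive.
Import Order.TTheory GRing.Theory Num.Theory numFieldNormedType.Exports.
Local Open Scope classical_set_scope.
Local Open Scope ring_scope.

(* Let j be the least number of formulas of Delta falsified by a model of
   nonzero probability, and call such models optimal.  Dividing numerator and
   denominator of the ratio by (1 - mu)^j leaves polynomials in mu whose values
   at mu = 1 are the masses of the optimal models satisfying alpha and of all
   optimal models, so p(alpha | Delta) = 1 iff every optimal model satisfies
   alpha.  The cardinality-maximal possible subsets of Delta are exactly the
   sets of formulas of Delta satisfied by an optimal model, which turns this
   into the empirical-consequence condition. *)

Definition violations (A : finType) (D : seq (pform A)) (v : pmodel A) : nat :=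
  count (predC (sat v)) D.

Lemma leq_violations (A : finType) (D : seq (pform A)) (v w : pmodel A) :
  (violations D v <= violations D w)%N = (count (sat w) D <= count (sat v) D)%N.
Proof.
rewrite /violations; have := count_predC (sat v) D; have := count_predC (sat w) D.
by move=> sizeEw sizeEv; apply/idP/idP; lia.
Qed.

Lemma size_le_count_sat (A : finType) (D S : seq (pform A)) (v : pmodel A) :
  uniq S -> {subset S <= D} -> all (sat v) S -> (size S <= count (sat v) D)%N.
Proof.
move=> uS sSD /allP Sv; rewrite -size_filter; apply: uniq_leq_size => // b bS.
by rewrite mem_filter Sv ?sSD.
Qed.

Lemma pm_ge0 (R : realType) (A : finType) (K : nat) (dm : 'I_K -> pmodel A)
    (v : pmodel A) :
  0 <= pm R dm v.
Proof. by rewrite /pm divr_ge0. Qed.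

Lemma exists_min_violations (R : realType) (A : finType) (K : nat)
    (dm : 'I_K -> pmodel A) (D : seq (pform A)) :
  (0 < K)%N -> exists2 vb, pm R dm vb != 0 &
    forall v, pm R dm v != 0 -> (violations D vb <= violations D v)%N.
Proof.
move=> K_gt0; have pm_dm0 : pm R dm (dm (Ordinal K_gt0)) != 0.
  rewrite /pm mulf_neq0 // ?invr_eq0 pnatr_eq0 -lt0n // card_gt0.
  by apply/set0Pn; exists (Ordinal K_gt0); rewrite inE.
have [vb pm_vb vb_min] :=
  @arg_minnP _ _ (fun v => pm R dm v != 0) (violations D) pm_dm0.
by exists vb.
Qed.

Section CardMaxPossible.
Variables (R : realType) (A : finType) (K : nat) (dm : 'I_K -> pmodel A).
Variables (D : seq (pform A)) (vb : pmodel A).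
Hypothesis uniqD : uniq D.
Hypothesis pm_vb : pm R dm vb != 0.
Hypothesis vb_min : forall v, pm R dm v != 0 ->
  (violations D vb <= violations D v)%N.

Lemma count_sat_le_min v : pm R dm v != 0 ->
  (count (sat v) D <= count (sat vb) D)%N.
Proof. by move/vb_min; rewrite leq_violations. Qed.

Lemma size_possible_le_min S : uniq S -> {subset S <= D} ->
  possible R dm S -> (size S <= count (sat vb) D)%N.
Proof.
move=> uS sSD [w [pm_w Sw]].
exact: leq_trans (size_le_count_sat uS sSD Sw) (count_sat_le_min pm_w).
Qed.

Lemma card_max_possible_filter v : pm R dm v != 0 ->
  violations D v = violations D vb -> card_max_possible R dm D [seq x <- D | sat v x].
Proof.
move=> pm_v eq_viol.
have countE : count (sat v) D = count (sat vb) D.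
  by apply/eqP; rewrite eqn_leq -!leq_violations eq_viol leqnn.
have sub : {subset [seq x <- D | sat v x] <= D}.
  by apply: mem_subseq; exact: filter_subseq.
split; last first.
  by move=> S' [uS' sS' pS' _]; rewrite size_filter countE size_possible_le_min.
split=> //; first exact: filter_uniq.
  by exists v; split=> //; exact: filter_all.
move=> b bD bNv possible_b.
have uniq_bS : uniq (b :: [seq x <- D | sat v x]) by rewrite /= bNv filter_uniq.
have sub_bS : {subset b :: [seq x <- D | sat v x] <= D}.
  by move=> x; rewrite inE => /predU1P[->|/sub].
have := size_possible_le_min uniq_bS sub_bS possible_b.
by rewrite /= size_filter countE ltnn.
Qed.

Lemma card_max_possible_violations S w :
  card_max_possible R dm D S -> pm R dm w != 0 -> all (sat w) S ->
  violations D w = violations D vb.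
Proof.
move=> [[uS sSD _ _] S_max] pm_w Sw.
have le_min : (count (sat vb) D <= size S)%N.
  rewrite -size_filter; apply: S_max.
  exact: (card_max_possible_filter pm_vb erefl).1.
apply/eqP; rewrite eqn_leq vb_min // andbT leq_violations.
exact: leq_trans le_min (size_le_count_sat uS sSD Sw).
Qed.

Lemma card_max_emp_consE a :
  (forall S, card_max_possible R dm D S -> emp_cons R dm S a) <->
  (forall v, pm R dm v != 0 -> violations D v = violations D vb -> sat v a).
Proof.
split=> [cons_a v pm_v eq_viol | opt_a S S_max w pm_w Sw].
  by apply: cons_a (card_max_possible_filter pm_v eq_viol) _ pm_v _; exact: filter_all.
exact: opt_a w pm_w (card_max_possible_violations S_max pm_w Sw).
Qed.

End CardMaxPossible.

Lemma pD_XMonemX (R : realType) (A : finType) (mu : R) (v : pmodel A)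
    (D : seq (pform A)) :
  pD mu v D = XMonemX (count (sat v) D) (violations D v) mu.
Proof.
rewrite /pD /XMonemX /violations.
elim: D => [|b D IH]; first by rewrite big_nil mulr1.
rewrite big_cons IH /pf /=; case: (sat v b); rewrite /= ?add0n ?add1n exprS.
  exact: mulrA.
exact: mulrCA.
Qed.

Lemma pf1 (R : realType) (A : finType) (v : pmodel A) (a : pform A) :
  pf (1 : R) v a = (sat v a)%:R.
Proof. by rewrite /pf; case: (sat v a); rewrite ?subrr. Qed.

Lemma continuous_pf (R : realType) (A : finType) (v : pmodel A) (a : pform A) :
  continuous (fun mu : R => pf mu v a).
Proof.
rewrite /pf; case: (sat v a) => mu; first exact: cvg_id.
by apply: cvgB; [exact: cvg_cst | exact: cvg_id].
Qed.

Lemma continuous_sumr (R : numFieldType) (T : topologicalType) (I : finType)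
    (f : I -> T -> R) :
  (forall i, continuous (f i)) -> continuous (fun x => \sum_i f i x).
Proof. by move=> f_cont; apply: continuous_big => //; exact: add_continuous. Qed.

Lemma weighted_mean_eq1 (R : numFieldType) (I : finType) (P : pred I)
    (w : I -> R) :
  (forall i, 0 <= w i) -> \sum_i w i != 0 ->
  (\sum_i (P i)%:R * w i) / \sum_i w i = 1 <-> (forall i, w i != 0 -> P i).
Proof.
move=> w_ge0 sum_neq0.
have sumE : \sum_i w i = \sum_i (P i)%:R * w i + \sum_i (~~ P i)%:R * w i.
  rewrite -big_split; apply: eq_bigr => i _.
  by case: (P i); rewrite /= ?mul1r ?mul0r ?addr0 ?add0r.
have NP_ge0 i : 0 <= (~~ P i)%:R * w i by rewrite mulr_ge0.
split=> [/divr1_eq eq_sum i w_neq0 | P_w].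
  apply: contraNT w_neq0 => NPi.
  have NP_sum0 : \sum_i (~~ P i)%:R * w i = 0.
    by apply: (addrI (\sum_i (P i)%:R * w i)); rewrite -sumE eq_sum addr0.
  have := psumr_eq0P (fun i _ => NP_ge0 i) NP_sum0 (i := i) isT.
  by rewrite NPi mul1r => ->.
suff -> : \sum_i (P i)%:R * w i = \sum_i w i by rewrite divff.
have NP_sum0 : \sum_i (~~ P i)%:R * w i = 0.
  by apply: big1 => i _; have [->|/P_w ->] := eqVneq (w i) 0; rewrite ?mulr0 ?mul0r.
by rewrite [in RHS]sumE NP_sum0 addr0.
Qed.

Section ScaledRatio.
Variables (R : realType) (A : finType) (K : nat) (dm : 'I_K -> pmodel A).
Variables (D : seq (pform A)) (a : pform A) (vb : pmodel A).
Hypothesis pm_vb : pm R dm vb != 0.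
Hypothesis vb_min : forall v, pm R dm v != 0 ->
  (violations D vb <= violations D v)%N.

Definition scaled_weight (v : pmodel A) (mu : R) : R :=
  pm R dm v * XMonemX (count (sat v) D) (violations D v - violations D vb) mu.

Definition scaled_ratio (mu : R) : R :=
  (\sum_v pf mu v a * scaled_weight v mu) / \sum_v scaled_weight v mu.

Lemma pD_pm_scaled (mu : R) (v : pmodel A) :
  pD mu v D * pm R dm v = scaled_weight v mu * (1 - mu) ^+ violations D vb.
Proof.
rewrite pD_XMonemX /scaled_weight.
have [->|/vb_min le_vb] := eqVneq (pm R dm v) 0; first by rewrite !(mulr0, mul0r).
by rewrite -XMonemX0n -mulrA XMonemXM add0n subnKC // mulrC.
Qed.

Lemma grm_ratio_scaled (mu : R) : mu != 1 -> grm_ratio dm a D mu = scaled_ratio mu.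
Proof.
move=> mu_neq1; have scale_neq0 : (1 - mu) ^+ violations D vb != 0.
  by rewrite expf_neq0 // subr_eq0 eq_sym.
rewrite /grm_ratio /scaled_ratio.
under eq_bigr do rewrite -mulrA pD_pm_scaled mulrA.
under [X in _ / X]eq_bigr do rewrite pD_pm_scaled.
by rewrite -!mulr_suml invfM mulrACA mulfV // mulr1.
Qed.

Lemma scaled_weight1 v :
  scaled_weight v 1 = pm R dm v * (violations D v == violations D vb)%:R.
Proof.
rewrite /scaled_weight /XMonemX onem1 expr1n mul1r expr0n subn_eq0.
have [->|/vb_min le_vb] := eqVneq (pm R dm v) 0; first by rewrite !mul0r.
by rewrite eqn_leq le_vb andbT.
Qed.

Lemma scaled_weight1_ge0 v : 0 <= scaled_weight v 1.
Proof. by rewrite scaled_weight1 mulr_ge0 ?pm_ge0. Qed.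

Lemma sum_scaled_weight1_neq0 : \sum_v scaled_weight v 1 != 0.
Proof.
rewrite psumr_neq0 => [|v _]; last exact: scaled_weight1_ge0.
apply/hasP; exists vb; first exact: mem_index_enum.
by rewrite scaled_weight1 eqxx mulr1 lt_def pm_vb pm_ge0.
Qed.

Lemma continuous_scaled_weight v : continuous (scaled_weight v).
Proof. by move=> mu; apply: cvgM; [exact: cvg_cst | exact: continuous_XMonemX]. Qed.

Lemma grm_ratio_cvg : grm_ratio dm a D mu @[mu --> (1 : R)^'-] --> scaled_ratio 1.
Proof.
have near_eq : {near (1 : R)^'-, scaled_ratio =1 grm_ratio dm a D}.
  near=> mu; rewrite grm_ratio_scaled // lt_eqF //; near: mu; exact: nbhs_left_lt.
apply: cvg_trans (near_eq_cvg near_eq) _; apply: cvg_at_left_filter.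
apply: cvgM; first by apply: continuous_sumr => v mu; apply: cvgM;
  [exact: continuous_pf | exact: continuous_scaled_weight].
apply: cvgV sum_scaled_weight1_neq0 _.
exact: continuous_sumr continuous_scaled_weight _.
Unshelve. all: by end_near.
Qed.

Lemma scaled_ratio1_eq1 : scaled_ratio 1 = 1 <->
  (forall v, pm R dm v != 0 -> violations D v = violations D vb -> sat v a).
Proof.
rewrite /scaled_ratio; under eq_bigr do rewrite pf1.
rewrite (weighted_mean_eq1 (fun v => sat v a) scaled_weight1_ge0); last first.
  exact: sum_scaled_weight1_neq0.
split=> [opt_a v pm_v eq_viol | opt_a v].
  by apply: opt_a; rewrite scaled_weight1 eq_viol eqxx mulr1.
rewrite scaled_weight1 mulf_eq0 negb_or pnatr_eq0 eqb0 negbK => /andP[pm_v /eqP].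
exact: opt_a.
Qed.

End ScaledRatio.

Theorem corollary4 (R : realType) (A : finType) (K : nat) (hK : (0 < K)%N)
  (dm : 'I_K -> pmodel A) (a : pform A) (D : seq (pform A)) (hD : uniq D) :
  (@grm_ratio R A K dm a D mu @[mu --> (1 : R)^'-] --> (1 : R)) <->
  (forall S, @card_max_possible R A K dm D S -> @emp_cons R A K dm S a).
Proof.
have [vb pm_vb vb_min] := exists_min_violations R dm D hK.
rewrite (card_max_emp_consE hD pm_vb vb_min a) -(scaled_ratio1_eq1 a pm_vb vb_min).
have ratio_cvg := grm_ratio_cvg (a := a) pm_vb vb_min.
split=> [cvg1 | ratio1]; first exact (cvg_unique (@Rhausdorff R) ratio_cvg cvg1).
by move: ratio_cvg; rewrite ratio1.
Qed.
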